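(* Let $\mathcal{C}$ be a peircean bicategory, write $a;^\bullet b:=\neg(\neg a;\neg b)$ and $\mathrm{id}^\bullet_X:=\neg\,\mathrm{id}_X$. For every arrow $c:X\to Y$: (1) $c;(\neg c)^\dagger\le\mathrm{id}^\bullet_X$; (2) $\mathrm{id}_Y\le(\neg c)^\dagger;^\bullet c$; (3) $(\neg c)^\dagger;c\le\mathrm{id}^\bullet_Y$; (4) $\mathrm{id}_X\le c;^\bullet(\neg c)^\dagger$.
   Context: Composition $;$ in diagrammatic order. A cartesian bicategory is a poset-enriched symmetric monoidal category with, for each $X$, commutative comonoid $(\mathrm{copy}_X,\mathrm{disc}_X)$ and monoid $(\mathrm{cocopy}_X,\mathrm{codisc}_X)$ forming special Frobenius bimonoids, comonoid left adjoint to monoid, every arrow $c$ satisfying $c;\mathrm{copy}\le\mathrm{copy};(c\otimes c)$ and $c;\mathrm{disc}\le\mathrm{disc}$, with standard coherence. A map is an arrow $f$ with $f;\mathrm{copy}=\mathrm{copy};(f\otimes f)$ and $f;\mathrm{disc}=\mathrm{disc}$. A peircean bicategory is a cartesian bicategory whose homsets carry Boolean algebras (with the given order) such that $f;\neg c=\neg(f;c)$ for every map $f:X\to Y$ and arrow $c:Y\to Z$. The converse of $c:X\to Y$ is $c^\dagger=(\mathrm{id}_Y\otimes(\mathrm{codisc}_X;\mathrm{copy}_X));(\mathrm{id}_Y\otimes c\otimes\mathrm{id}_X);((\mathrm{cocopy}_Y;\mathrm{disc}_Y)\otimes\mathrm{id}_X):Y\to X$. *)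

Record poset_smc := {
  ob : Type;
  hom : ob -> ob -> Type;
  le : forall {X Y : ob}, hom X Y -> hom X Y -> Prop;
  le_refl : forall X Y (a : hom X Y), le a a;
  le_trans : forall X Y (a b c : hom X Y), le a b -> le b c -> le a c;
  le_antisym : forall X Y (a b : hom X Y), le a b -> le b a -> a = b;

  seq : forall {X Y Z : ob}, hom X Y -> hom Y Z -> hom X Z;
  idm : forall (X : ob), hom X X;
  seq_idl : forall X Y (a : hom X Y), seq (idm X) a = a;
  seq_idr : forall X Y (a : hom X Y), seq a (idm Y) = a;
  seq_assoc : forall X Y Z W (a : hom X Y) (b : hom Y Z) (c : hom Z W),
      seq (seq a b) c = seq a (seq b c);
  seq_mono : forall X Y Z (a a' : hom X Y) (b b' : hom Y Z),
      le a a' -> le b b' -> le (seq a b) (seq a' b');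

  tens : ob -> ob -> ob;
  tensh : forall {X Y X' Y' : ob}, hom X Y -> hom X' Y' -> hom (tens X X') (tens Y Y');
  unit : ob;
  tens_id : forall X Y, tensh (idm X) (idm Y) = idm (tens X Y);
  tens_seq : forall X Y Z X' Y' Z' (a : hom X Y) (b : hom Y Z) (a' : hom X' Y') (b' : hom Y' Z'),
      tensh (seq a b) (seq a' b') = seq (tensh a a') (tensh b b');
  tens_mono : forall X Y X' Y' (a b : hom X Y) (a' b' : hom X' Y'),
      le a b -> le a' b' -> le (tensh a a') (tensh b b');

  assoc : forall X Y Z, hom (tens (tens X Y) Z) (tens X (tens Y Z));
  assoc_inv : forall X Y Z, hom (tens X (tens Y Z)) (tens (tens X Y) Z);
  assoc_inv_l : forall X Y Z, seq (assoc X Y Z) (assoc_inv X Y Z) = idm _;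
  assoc_inv_r : forall X Y Z, seq (assoc_inv X Y Z) (assoc X Y Z) = idm _;
  lunit : forall X, hom (tens unit X) X;
  lunit_inv : forall X, hom X (tens unit X);
  lunit_inv_l : forall X, seq (lunit X) (lunit_inv X) = idm _;
  lunit_inv_r : forall X, seq (lunit_inv X) (lunit X) = idm _;
  runit : forall X, hom (tens X unit) X;
  runit_inv : forall X, hom X (tens X unit);
  runit_inv_l : forall X, seq (runit X) (runit_inv X) = idm _;
  runit_inv_r : forall X, seq (runit_inv X) (runit X) = idm _;
  sym : forall X Y, hom (tens X Y) (tens Y X);

  assoc_nat : forall X Y Z X' Y' Z' (a : hom X X') (b : hom Y Y') (c : hom Z Z'),
      seq (tensh (tensh a b) c) (assoc X' Y' Z') = seq (assoc X Y Z) (tensh a (tensh b c));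
  lunit_nat : forall X Y (a : hom X Y),
      seq (tensh (idm unit) a) (lunit Y) = seq (lunit X) a;
  runit_nat : forall X Y (a : hom X Y),
      seq (tensh a (idm unit)) (runit Y) = seq (runit X) a;
  sym_nat : forall X Y X' Y' (a : hom X X') (b : hom Y Y'),
      seq (tensh a b) (sym X' Y') = seq (sym X Y) (tensh b a);

  pentagon : forall W X Y Z,
      seq (seq (tensh (assoc W X Y) (idm Z)) (assoc W (tens X Y) Z))
          (tensh (idm W) (assoc X Y Z))
      = seq (assoc (tens W X) Y Z) (assoc W X (tens Y Z));
  triangle : forall X Y,
      seq (assoc X unit Y) (tensh (idm X) (lunit Y)) = tensh (runit X) (idm Y);
  hexagon : forall X Y Z,
      seq (seq (assoc X Y Z) (sym X (tens Y Z))) (assoc Y Z X)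
      = seq (seq (tensh (sym X Y) (idm Z)) (assoc Y X Z)) (tensh (idm Y) (sym X Z));
  sym_inv : forall X Y, seq (sym X Y) (sym Y X) = idm _
}.

Arguments le {C X Y} _ _ : rename.
Arguments seq {C X Y Z} _ _ : rename.
Arguments idm {C} X : rename.
Arguments tens {C} _ _ : rename.
Arguments tensh {C X Y X' Y'} _ _ : rename.
Arguments unit {C} : rename.
Arguments assoc {C} X Y Z : rename.
Arguments assoc_inv {C} X Y Z : rename.
Arguments lunit {C} X : rename.
Arguments lunit_inv {C} X : rename.
Arguments runit {C} X : rename.
Arguments runit_inv {C} X : rename.
Arguments sym {C} X Y : rename.

Declare Scope cb_scope.
Delimit Scope cb_scope with cb.
Notation "a ;; b" := (seq a b) (at level 40, left associativity) : cb_scope.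
Notation "a ⊗ b" := (tensh a b) (at level 35) : cb_scope.
Notation "a ≤ b" := (le a b) (at level 70) : cb_scope.
Open Scope cb_scope.

Definition interchange {C : poset_smc} (X Y : ob C) :
    hom C (tens (tens X X) (tens Y Y)) (tens (tens X Y) (tens X Y)) :=
  assoc X X (tens Y Y)
  ;; (idm X ⊗ assoc_inv X Y Y)
  ;; (idm X ⊗ (sym X Y ⊗ idm Y))
  ;; (idm X ⊗ assoc Y X Y)
  ;; assoc_inv X Y (tens X Y).

Record cartesian_bicategory (C : poset_smc) := {
  copy : forall X : ob C, hom C X (tens X X);
  disc : forall X : ob C, hom C X unit;
  cocopy : forall X : ob C, hom C (tens X X) X;
  codisc : forall X : ob C, hom C unit X;

  copy_assoc : forall X,
      copy X ;; (copy X ⊗ idm X) ;; assoc X X X = copy X ;; (idm X ⊗ copy X);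
  copy_unitl : forall X, copy X ;; (disc X ⊗ idm X) ;; lunit X = idm X;
  copy_unitr : forall X, copy X ;; (idm X ⊗ disc X) ;; runit X = idm X;
  copy_comm : forall X, copy X ;; sym X X = copy X;
  cocopy_assoc : forall X,
      assoc_inv X X X ;; (cocopy X ⊗ idm X) ;; cocopy X = (idm X ⊗ cocopy X) ;; cocopy X;
  cocopy_unitl : forall X, lunit_inv X ;; (codisc X ⊗ idm X) ;; cocopy X = idm X;
  cocopy_unitr : forall X, runit_inv X ;; (idm X ⊗ codisc X) ;; cocopy X = idm X;
  cocopy_comm : forall X, sym X X ;; cocopy X = cocopy X;
  frobenius_l : forall X,
      (copy X ⊗ idm X) ;; assoc X X X ;; (idm X ⊗ cocopy X) = cocopy X ;; copy X;
  frobenius_r : forall X,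
      (idm X ⊗ copy X) ;; assoc_inv X X X ;; (cocopy X ⊗ idm X) = cocopy X ;; copy X;
  special : forall X, copy X ;; cocopy X = idm X;
  copy_adj_unit : forall X, idm X ≤ copy X ;; cocopy X;
  copy_adj_counit : forall X, cocopy X ;; copy X ≤ idm (tens X X);
  disc_adj_unit : forall X, idm X ≤ disc X ;; codisc X;
  disc_adj_counit : forall X, codisc X ;; disc X ≤ idm unit;
  lax_copy : forall X Y (c : hom C X Y), c ;; copy Y ≤ copy X ;; (c ⊗ c);
  lax_disc : forall X Y (c : hom C X Y), c ;; disc Y ≤ disc X;
  copy_tens : forall X Y, copy (tens X Y) = (copy X ⊗ copy Y) ;; interchange X Y;
  disc_tens : forall X Y, disc (tens X Y) = (disc X ⊗ disc Y) ;; lunit unit;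
  copy_unit : copy unit = lunit_inv unit;
  disc_unit : disc unit = idm unit;
  cocopy_tens : forall X Y, interchange X Y ;; cocopy (tens X Y) = (cocopy X ⊗ cocopy Y);
  codisc_tens : forall X Y, codisc (tens X Y) = lunit_inv unit ;; (codisc X ⊗ codisc Y);
  cocopy_unit : cocopy unit = lunit unit;
  codisc_unit : codisc unit = idm unit
}.

Arguments copy {C} _ X : rename.
Arguments disc {C} _ X : rename.
Arguments cocopy {C} _ X : rename.
Arguments codisc {C} _ X : rename.

Definition is_map {C : poset_smc} (CB : cartesian_bicategory C) {X Y : ob C}
    (f : hom C X Y) : Prop :=
  f ;; copy CB Y = copy CB X ;; (f ⊗ f) /\ f ;; disc CB Y = disc CB X.

Definition converse {C : poset_smc} (CB : cartesian_bicategory C) {X Y : ob C}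
    (c : hom C X Y) : hom C Y X :=
  runit_inv Y
  ;; (idm Y ⊗ (codisc CB X ;; copy CB X))
  ;; assoc_inv Y X X
  ;; ((idm Y ⊗ c) ⊗ idm X)
  ;; ((cocopy CB Y ;; disc CB Y) ⊗ idm X)
  ;; lunit X.

Record boolean_homs (C : poset_smc) := {
  bmeet : forall X Y : ob C, hom C X Y -> hom C X Y -> hom C X Y;
  bjoin : forall X Y : ob C, hom C X Y -> hom C X Y -> hom C X Y;
  btop : forall X Y : ob C, hom C X Y;
  bbot : forall X Y : ob C, hom C X Y;
  bneg : forall X Y : ob C, hom C X Y -> hom C X Y;
  bmeet_glb : forall X Y (a b z : hom C X Y), z ≤ bmeet X Y a b <-> (z ≤ a /\ z ≤ b);
  bjoin_lub : forall X Y (a b z : hom C X Y), bjoin X Y a b ≤ z <-> (a ≤ z /\ b ≤ z);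
  btop_max : forall X Y (a : hom C X Y), a ≤ btop X Y;
  bbot_min : forall X Y (a : hom C X Y), bbot X Y ≤ a;
  bdistr : forall X Y (a b c : hom C X Y),
      bmeet X Y a (bjoin X Y b c) = bjoin X Y (bmeet X Y a b) (bmeet X Y a c);
  bneg_meet : forall X Y (a : hom C X Y), bmeet X Y a (bneg X Y a) = bbot X Y;
  bneg_join : forall X Y (a : hom C X Y), bjoin X Y a (bneg X Y a) = btop X Y
}.

Arguments bneg {C} _ {X Y} _ : rename.

Definition peircean {C : poset_smc} (CB : cartesian_bicategory C) (B : boolean_homs C) : Prop :=
  forall (X Y Z : ob C) (f : hom C X Y) (c : hom C Y Z),
    is_map CB f -> f ;; bneg B c = bneg B (f ;; c).

Definition dseq {C : poset_smc} (B : boolean_homs C) {X Y Z : ob C}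
    (a : hom C X Y) (b : hom C Y Z) : hom C X Z :=
  bneg B (bneg B a ;; bneg B b).

Definition did {C : poset_smc} (B : boolean_homs C) (X : ob C) : hom C X X :=
  bneg B (idm X).


(* In a cartesian bicategory the meet is [u ⊓ v = copy ; (u ⊗ v) ; cocopy], and the
   Frobenius law gives [copy ; (a ⊗ id) ≤ a ; copy ; (id ⊗ a†)].  Hence
   [(a ; g) ⊓ id ≤ a ; (g ⊓ a†)], so [a ; ¬a†] is disjoint from the identity as soon as
   [a ; ⊥ = ⊥], which holds in a peircean bicategory because [disc] is a map.
   Converse is "bend, swap, unbend", and bending is invertible by the snake equations,
   so converse is an order involution and commutes with negation: [(¬c)† = ¬(c†)].
   The four inequalities are [a ; ¬a† ≤ ¬id] for [a = c, c†, ¬c†, ¬c]; the second and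
   fourth after contraposition. *)

Arguments le_refl {C X Y} a : rename.
Arguments le_trans {C X Y} a b c : rename.
Arguments le_antisym {C X Y} a b : rename.
Arguments seq_mono {C X Y Z a a' b b'} : rename.
Arguments tens_mono {C X Y X' Y' a b a' b'} : rename.

Ltac reassoc := repeat rewrite seq_assoc.

Section Monoidal.

Context {C : poset_smc}.

Lemma seq2_congr_r {A B D E : ob C} (x : hom C A B) (y : hom C B D) (z : hom C A D)
  (r : hom C D E) : x ;; y = z -> x ;; (y ;; r) = z ;; r.
Proof. intros H. rewrite <- seq_assoc, H. reflexivity. Qed.

Lemma seq3_congr_r {A B D F E : ob C} (x : hom C A B) (y : hom C B D) (w : hom C D F)
  (z : hom C A F) (r : hom C F E) : x ;; y ;; w = z -> x ;; (y ;; (w ;; r)) = z ;; r.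
Proof. intros H. rewrite <- H. reassoc. reflexivity. Qed.

Lemma tensh_id_seq {X A B D : ob C} (f : hom C A B) (g : hom C B D) :
  idm X ⊗ (f ;; g) = (idm X ⊗ f) ;; (idm X ⊗ g).
Proof. rewrite <- tens_seq, seq_idl. reflexivity. Qed.

Lemma tensh_seq_id {X A B D : ob C} (f : hom C A B) (g : hom C B D) :
  (f ;; g) ⊗ idm X = (f ⊗ idm X) ;; (g ⊗ idm X).
Proof. rewrite <- tens_seq, seq_idl. reflexivity. Qed.

Lemma tensh_factor_lr {A B A' B' : ob C} (a : hom C A B) (b : hom C A' B') :
  a ⊗ b = (a ⊗ idm A') ;; (idm B ⊗ b).
Proof. rewrite <- tens_seq, seq_idl, seq_idr. reflexivity. Qed.

Lemma tensh_factor_rl {A B A' B' : ob C} (a : hom C A B) (b : hom C A' B') :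
  a ⊗ b = (idm A ⊗ b) ;; (a ⊗ idm B').
Proof. rewrite <- tens_seq, seq_idl, seq_idr. reflexivity. Qed.

Lemma tensh_slide {A B A' B' : ob C} (a : hom C A B) (b : hom C A' B') :
  (a ⊗ idm A') ;; (idm B ⊗ b) = (idm A ⊗ b) ;; (a ⊗ idm B').
Proof. rewrite <- tensh_factor_lr, <- tensh_factor_rl. reflexivity. Qed.

Lemma eq_le {X Y : ob C} (a b : hom C X Y) : a = b -> a ≤ b.
Proof. intros ->; apply le_refl. Qed.

Lemma seq_monol {X Y Z : ob C} (a a' : hom C X Y) (b : hom C Y Z) :
  a ≤ a' -> a ;; b ≤ a' ;; b.
Proof. intros H; apply seq_mono; [exact H | apply le_refl]. Qed.

Lemma seq_monor {X Y Z : ob C} (a : hom C X Y) (b b' : hom C Y Z) :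
  b ≤ b' -> a ;; b ≤ a ;; b'.
Proof. intros H; apply seq_mono; [apply le_refl | exact H]. Qed.

Lemma assoc_invK {X Y Z W : ob C} (r : hom C _ W) :
  assoc_inv X Y Z ;; (assoc X Y Z ;; r) = r.
Proof. rewrite <- seq_assoc, assoc_inv_r, seq_idl. reflexivity. Qed.

Lemma assoc_inv_nat {X Y Z X' Y' Z' : ob C}
  (a : hom C X X') (b : hom C Y Y') (c : hom C Z Z') :
  (a ⊗ (b ⊗ c)) ;; assoc_inv X' Y' Z' = assoc_inv X Y Z ;; ((a ⊗ b) ⊗ c).
Proof.
  rewrite <- (seq_idl _ _ _ (a ⊗ (b ⊗ c) ;; _)), <- (assoc_inv_r _ X Y Z).
  reassoc. rewrite <- (seq_assoc _ _ _ _ _ (assoc X Y Z)), <- assoc_nat.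
  reassoc. rewrite assoc_inv_l, seq_idr. reflexivity.
Qed.

Lemma runit_inv_nat {X Y : ob C} (a : hom C X Y) :
  a ;; runit_inv Y = runit_inv X ;; (a ⊗ idm unit).
Proof.
  rewrite <- (seq_idl _ _ _ (a ;; _)), <- (runit_inv_r _ X).
  reassoc. rewrite <- (seq_assoc _ _ _ _ _ (runit X)), <- runit_nat.
  reassoc. rewrite runit_inv_l, seq_idr. reflexivity.
Qed.

Lemma tensh_assoc_conj {X Y Z X' Y' Z' : ob C}
  (a : hom C X X') (b : hom C Y Y') (c : hom C Z Z') :
  (a ⊗ b) ⊗ c = assoc X Y Z ;; (a ⊗ (b ⊗ c)) ;; assoc_inv X' Y' Z'.
Proof. rewrite <- assoc_nat. reassoc. rewrite assoc_inv_l, seq_idr. reflexivity. Qed.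

Lemma iso_cancel_l {A B D : ob C} (i : hom C A B) (j : hom C B A) (f g : hom C B D) :
  j ;; i = idm B -> i ;; f = i ;; g -> f = g.
Proof.
  intros Hji H. rewrite <- (seq_idl _ _ _ f), <- (seq_idl _ _ _ g), <- Hji.
  reassoc. rewrite H. reflexivity.
Qed.

Lemma iso_cancel_r {A B D : ob C} (i : hom C B D) (j : hom C D B) (f g : hom C A B) :
  i ;; j = idm B -> f ;; i = g ;; i -> f = g.
Proof.
  intros Hij H. rewrite <- (seq_idr _ _ _ f), <- (seq_idr _ _ _ g), <- Hij.
  rewrite <- !seq_assoc, H. reflexivity.
Qed.

Lemma tensh_idr_unit_inj {X Y : ob C} (f g : hom C X Y) :
  f ⊗ idm unit = g ⊗ idm unit -> f = g.
Proof.
  intros H. apply (iso_cancel_r (runit_inv Y) (runit Y)); [apply runit_inv_r |].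
  rewrite !runit_inv_nat, H. reflexivity.
Qed.

Lemma tensh_idl_unit_inj {X Y : ob C} (f g : hom C X Y) :
  idm unit ⊗ f = idm unit ⊗ g -> f = g.
Proof.
  intros H. apply (iso_cancel_l (lunit X) (lunit_inv X)); [apply lunit_inv_r |].
  rewrite <- !lunit_nat, H. reflexivity.
Qed.

(* Kelly's lemmas, which this axiomatization leaves to be derived from the pentagon
   and triangle. *)

Lemma runit_tens (A B : ob C) :
  runit (tens A B) = assoc A B unit ;; (idm A ⊗ runit B).
Proof.
  apply tensh_idr_unit_inj.
  apply (iso_cancel_r (assoc A B unit) (assoc_inv A B unit)); [apply assoc_inv_l |].
  rewrite <- triangle, <- (tens_id _ A B).
  rewrite seq_assoc, assoc_nat, <- seq_assoc, <- pentagon. reassoc.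
  rewrite <- (tens_seq _ _ _ _ _ _ _ (idm A) (idm A)), seq_idl, triangle.
  rewrite <- assoc_nat, <- seq_assoc.
  rewrite <- (tens_seq _ _ _ _ _ _ _ _ _ (idm unit) (idm unit)), seq_idl.
  reflexivity.
Qed.

Lemma assoc_lunit (A B : ob C) :
  assoc unit A B ;; lunit (tens A B) = lunit A ⊗ idm B.
Proof.
  apply tensh_idl_unit_inj.
  apply (iso_cancel_l ((assoc unit unit A ⊗ idm B) ;; assoc unit (tens unit A) B)
                      (assoc_inv unit (tens unit A) B ;; (assoc_inv unit unit A ⊗ idm B))).
  { reassoc. rewrite <- (seq_assoc _ _ _ _ _ (assoc_inv unit unit A ⊗ idm B)).
    rewrite <- tens_seq, assoc_inv_r, seq_idl, tens_id, seq_idl, assoc_inv_r.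
    reflexivity. }
  rewrite tensh_id_seq, <- seq_assoc, pentagon. reassoc. rewrite triangle.
  rewrite <- (tens_id _ A B), <- !assoc_nat, <- seq_assoc, <- tensh_seq_id, triangle.
  reflexivity.
Qed.

Lemma lunit_unit : lunit (@unit C) = runit unit.
Proof.
  apply tensh_idr_unit_inj. rewrite <- triangle, <- assoc_lunit.
  f_equal.
  apply (iso_cancel_r (lunit unit) (lunit_inv unit)); [apply lunit_inv_l |].
  symmetry. apply lunit_nat.
Qed.

Lemma lunit_tens (A B : ob C) :
  lunit (tens A B) = assoc_inv unit A B ;; (lunit A ⊗ idm B).
Proof. rewrite <- assoc_lunit, assoc_invK. reflexivity. Qed.

Lemma assoc_inv_runit (A B : ob C) :
  assoc_inv A B unit ;; runit (tens A B) = idm A ⊗ runit B.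
Proof. rewrite runit_tens, assoc_invK. reflexivity. Qed.

Lemma runit_inv_tens (A B : ob C) :
  idm A ⊗ runit_inv B = runit_inv (tens A B) ;; assoc A B unit.
Proof.
  apply (iso_cancel_r (idm A ⊗ runit B) (idm A ⊗ runit_inv B)).
  { rewrite <- tens_seq, seq_idl, runit_inv_l, tens_id. reflexivity. }
  rewrite <- tens_seq, seq_idl, runit_inv_r, tens_id.
  reassoc. rewrite <- runit_tens, runit_inv_r. reflexivity.
Qed.

Lemma triangle_inv (X Y : ob C) :
  (runit_inv X ⊗ idm Y) ;; assoc X unit Y = idm X ⊗ lunit_inv Y.
Proof.
  apply (iso_cancel_r (idm X ⊗ lunit Y) (idm X ⊗ lunit_inv Y)).
  { rewrite <- tens_seq, seq_idl, lunit_inv_l, tens_id. reflexivity. }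
  reassoc. rewrite triangle, <- tens_seq, seq_idl, runit_inv_r, tens_id.
  rewrite <- tens_seq, seq_idl, lunit_inv_r, tens_id. reflexivity.
Qed.

Lemma pentagon_assoc_inv_r (W X Y Z : ob C) :
  assoc W X (tens Y Z) ;; (idm W ⊗ assoc_inv X Y Z) =
  assoc_inv (tens W X) Y Z ;; (assoc W X Y ⊗ idm Z) ;; assoc W (tens X Y) Z.
Proof.
  apply (iso_cancel_r (idm W ⊗ assoc X Y Z) (idm W ⊗ assoc_inv X Y Z)).
  { rewrite <- tens_seq, seq_idl, assoc_inv_l, tens_id. reflexivity. }
  reassoc. rewrite <- tens_seq, seq_idl, assoc_inv_r, tens_id, seq_idr.
  rewrite <- (seq_assoc _ _ _ _ _ (assoc W X Y ⊗ idm Z)), pentagon, assoc_invK.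
  reflexivity.
Qed.

Lemma pentagon_assoc_inv_l (W X Y Z : ob C) :
  (assoc_inv W X Y ⊗ idm Z) ;; assoc (tens W X) Y Z =
  assoc W (tens X Y) Z ;; (idm W ⊗ assoc X Y Z) ;; assoc_inv W X (tens Y Z).
Proof.
  apply (iso_cancel_r (assoc W X (tens Y Z)) (assoc_inv W X (tens Y Z))).
  { apply assoc_inv_l. }
  reassoc. rewrite assoc_inv_r, seq_idr, <- pentagon. reassoc.
  rewrite <- (seq_assoc _ _ _ _ _ (assoc_inv W X Y ⊗ idm Z)), <- tens_seq.
  rewrite assoc_inv_r, seq_idl, tens_id, seq_idl. reflexivity.
Qed.

End Monoidal.

Section Cartesian.

Context {C : poset_smc} (CB : cartesian_bicategory C).

Definition cup (X : ob C) : hom C unit (tens X X) := codisc CB X ;; copy CB X.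
Definition cap (X : ob C) : hom C (tens X X) unit := cocopy CB X ;; disc CB X.

Lemma snake_l (X : ob C) :
  lunit_inv X ;; (cup X ⊗ idm X) ;; assoc X X X ;; (idm X ⊗ cap X) ;; runit X = idm X.
Proof.
  unfold cup, cap. rewrite tensh_id_seq, tensh_seq_id. reassoc.
  rewrite (seq3_congr_r _ _ _ _ _ (frobenius_l _ _ X)). reassoc.
  rewrite (seq3_congr_r _ _ _ _ _ (cocopy_unitl _ _ X)), seq_idl, <- seq_assoc.
  apply copy_unitr.
Qed.

Lemma snake_r (X : ob C) :
  runit_inv X ;; (idm X ⊗ cup X) ;; assoc_inv X X X ;; (cap X ⊗ idm X) ;; lunit X = idm X.
Proof.
  unfold cup, cap. rewrite tensh_id_seq, tensh_seq_id. reassoc.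
  rewrite (seq3_congr_r _ _ _ _ _ (frobenius_r _ _ X)). reassoc.
  rewrite (seq3_congr_r _ _ _ _ _ (cocopy_unitr _ _ X)), seq_idl, <- seq_assoc.
  apply copy_unitl.
Qed.

Lemma copy_cup (X : ob C) :
  copy CB X = runit_inv X ;; (idm X ⊗ cup X) ;; assoc_inv X X X ;; (cocopy CB X ⊗ idm X).
Proof.
  unfold cup. rewrite tensh_id_seq. reassoc.
  rewrite <- (seq_assoc _ _ _ _ _ (idm X ⊗ copy CB X) (assoc_inv X X X)), frobenius_r.
  rewrite <- !seq_assoc, cocopy_unitr, seq_idl. reflexivity.
Qed.

Lemma cocopy_cap (X : ob C) :
  (copy CB X ⊗ idm X) ;; assoc X X X ;; (idm X ⊗ cap X) ;; runit X = cocopy CB X.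
Proof.
  unfold cap. rewrite tensh_id_seq. reassoc.
  rewrite (seq3_congr_r _ _ _ _ _ (frobenius_l _ _ X)). reassoc.
  rewrite <- (seq_assoc _ _ _ _ _ (copy CB X)), copy_unitr, seq_idr. reflexivity.
Qed.

Lemma cocopy_cap_tens (X Z : ob C) :
  (copy CB X ⊗ idm (tens X Z)) ;; assoc X X (tens X Z) ;; (idm X ⊗ assoc_inv X X Z)
    ;; (idm X ⊗ (cap X ⊗ idm Z)) ;; (idm X ⊗ lunit Z)
  = assoc_inv X X Z ;; (cocopy CB X ⊗ idm Z).
Proof.
  reassoc. rewrite (seq2_congr_r _ _ _ _ (pentagon_assoc_inv_r X X X Z)).
  rewrite <- (tens_id _ X Z). reassoc.
  rewrite (seq2_congr_r _ _ _ _ (assoc_inv_nat _ _ _)). reassoc.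
  rewrite (seq2_congr_r _ _ _ _ (eq_sym (assoc_nat _ _ _ _ _ _ _ _ _ _))).
  reassoc. rewrite triangle, <- cocopy_cap, !tensh_seq_id. reassoc. reflexivity.
Qed.

Lemma cocopy_lax {X Y : ob C} (a : hom C X Y) :
  cocopy CB X ;; a ≤ (a ⊗ a) ;; cocopy CB Y.
Proof.
  apply (le_trans _ (cocopy CB X ;; (a ;; copy CB Y) ;; cocopy CB Y)).
  { apply eq_le. reassoc. rewrite special, seq_idr. reflexivity. }
  apply (le_trans _ (cocopy CB X ;; copy CB X ;; (a ⊗ a) ;; cocopy CB Y)).
  { apply seq_monol. rewrite seq_assoc. apply seq_monor, lax_copy. }
  rewrite <- (seq_idl _ _ _ ((a ⊗ a) ;; cocopy CB Y)), <- seq_assoc.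
  apply seq_monol, seq_monol, copy_adj_counit.
Qed.


Lemma cocopy_le_runit (X : ob C) : cocopy CB X ≤ (idm X ⊗ disc CB X) ;; runit X.
Proof.
  apply (le_trans _ (cocopy CB X ;; copy CB X ;; (idm X ⊗ disc CB X) ;; runit X)).
  { apply eq_le. reassoc.
    rewrite <- (seq_assoc _ _ _ _ _ (copy CB X)), copy_unitr, seq_idr. reflexivity. }
  rewrite <- (seq_idl _ _ _ ((idm X ⊗ disc CB X) ;; runit X)). reassoc.
  rewrite <- (seq_assoc _ _ _ _ _ (cocopy CB X)). apply seq_monol, copy_adj_counit.
Qed.

Lemma cocopy_le_lunit (X : ob C) : cocopy CB X ≤ (disc CB X ⊗ idm X) ;; lunit X.
Proof.
  apply (le_trans _ (cocopy CB X ;; copy CB X ;; (disc CB X ⊗ idm X) ;; lunit X)).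
  { apply eq_le. reassoc.
    rewrite <- (seq_assoc _ _ _ _ _ (copy CB X)), copy_unitl, seq_idr. reflexivity. }
  rewrite <- (seq_idl _ _ _ ((disc CB X ⊗ idm X) ;; lunit X)). reassoc.
  rewrite <- (seq_assoc _ _ _ _ _ (cocopy CB X)). apply seq_monol, copy_adj_counit.
Qed.

Lemma copy_tensh_cocopy_le_l {X Y : ob C} (u v : hom C X Y) :
  copy CB X ;; (u ⊗ v) ;; cocopy CB Y ≤ u.
Proof.
  eapply le_trans; [apply seq_monor, cocopy_le_runit |].
  reassoc. rewrite <- (seq_assoc _ _ _ _ _ (u ⊗ v)), <- tens_seq, seq_idr.
  eapply le_trans; [apply seq_monor, seq_monol, (tens_mono (le_refl u) (lax_disc _ CB _ _ v)) |].
  rewrite (tensh_factor_rl u (disc CB X)). reassoc. rewrite runit_nat.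
  rewrite (seq3_congr_r _ _ _ _ _ (copy_unitr _ _ X)), seq_idl. apply le_refl.
Qed.

Lemma copy_tensh_cocopy_le_r {X Y : ob C} (u v : hom C X Y) :
  copy CB X ;; (u ⊗ v) ;; cocopy CB Y ≤ v.
Proof.
  eapply le_trans; [apply seq_monor, cocopy_le_lunit |].
  reassoc. rewrite <- (seq_assoc _ _ _ _ _ (u ⊗ v)), <- tens_seq, seq_idr.
  eapply le_trans; [apply seq_monor, seq_monol, (tens_mono (lax_disc _ CB _ _ u) (le_refl v)) |].
  rewrite (tensh_factor_lr (disc CB X) v). reassoc. rewrite lunit_nat.
  rewrite (seq3_congr_r _ _ _ _ _ (copy_unitl _ _ X)), seq_idl. apply le_refl.
Qed.

Lemma disc_is_map (X : ob C) : is_map CB (disc CB X).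
Proof.
  split.
  - rewrite copy_unit.
    apply (iso_cancel_r (lunit unit) (lunit_inv unit)); [apply lunit_inv_l |].
    rewrite seq_assoc, lunit_inv_r, seq_idr, (tensh_factor_lr (disc CB X) (disc CB X)).
    reassoc. rewrite lunit_nat, (seq3_congr_r _ _ _ _ _ (copy_unitl _ _ X)), seq_idl.
    reflexivity.
  - rewrite disc_unit, seq_idr. reflexivity.
Qed.

Lemma le_disc_codisc {X Y : ob C} (t : hom C X Y) : t ≤ disc CB X ;; codisc CB Y.
Proof.
  apply (le_trans _ (t ;; (disc CB Y ;; codisc CB Y))).
  { eapply le_trans; [apply eq_le; symmetry; apply seq_idr |].
    apply seq_monor, disc_adj_unit. }
  rewrite <- seq_assoc. apply seq_monol, lax_disc.
Qed.

End Cartesian.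

Section Converse.

Context {C : poset_smc} (CB : cartesian_bicategory C).

Local Notation "c †" := (converse CB c) (at level 8, left associativity, format "c †").

Lemma copy_converse {X Y : ob C} (c : hom C X Y) :
  copy CB Y ;; (idm Y ⊗ c†) =
  runit_inv Y ;; (idm Y ⊗ cup CB X) ;; assoc_inv Y X X ;; ((idm Y ⊗ c) ⊗ idm X)
    ;; (cocopy CB Y ⊗ idm X).
Proof.
  unfold converse. fold (cup CB X) (cap CB Y).
  rewrite !tensh_id_seq. reassoc.
  rewrite runit_inv_tens. reassoc.
  rewrite (seq2_congr_r _ _ _ _ (runit_inv_nat (copy CB Y))). reassoc.
  rewrite (seq2_congr_r _ _ _ _ (eq_sym (assoc_nat _ _ _ _ _ _ _ (idm Y) (idm Y) (cup CB X)))).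
  reassoc. rewrite tens_id.
  rewrite (seq2_congr_r _ _ _ _ (eq_sym (tens_seq _ _ _ _ _ _ _ _ _ _ _))), seq_idr, seq_idl.
  rewrite (tensh_factor_rl (copy CB Y) (cup CB X)). reassoc.
  rewrite (seq2_congr_r _ _ _ _ (eq_sym (tensh_id_seq _ _))).
  rewrite <- (assoc_inv_nat (idm Y) c (idm X)), tensh_id_seq. reassoc.
  rewrite (seq2_congr_r _ _ _ _ (eq_sym (assoc_nat _ _ _ _ _ _ _ (idm Y) (idm Y) _))).
  reassoc. rewrite tens_id.
  rewrite (seq2_congr_r _ _ _ _ (eq_sym (tens_seq _ _ _ _ _ _ _
             (copy CB Y) (idm (tens Y Y)) (idm (tens X X)) (c ⊗ idm X)))).
  rewrite seq_idr, seq_idl, (tensh_factor_rl (copy CB Y) (c ⊗ idm X)). reassoc.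
  rewrite (seq2_congr_r _ _ _ _ (eq_sym (assoc_inv_nat (idm Y) c (idm X)))).
  reassoc. rewrite <- cocopy_cap_tens. reassoc. reflexivity.
Qed.

(* Frobenius rewrites [copy] through [cup]; laxity of [cocopy] then pulls [a] in front. *)
Lemma copy_tensh_le_converse {X Y : ob C} (a : hom C X Y) :
  copy CB X ;; (a ⊗ idm X) ≤ a ;; copy CB Y ;; (idm Y ⊗ a†).
Proof.
  rewrite seq_assoc, copy_converse, (copy_cup CB X).
  apply (le_trans _ (runit_inv X ;; (idm X ⊗ cup CB X) ;; assoc_inv X X X
                     ;; (((a ⊗ a) ;; cocopy CB Y) ⊗ idm X))).
  { reassoc. do 3 apply seq_monor. rewrite <- tensh_seq_id.
    apply tens_mono; [apply cocopy_lax | apply le_refl]. }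
  apply eq_le. rewrite tensh_seq_id. reassoc.
  rewrite (seq2_congr_r _ _ _ _ (runit_inv_nat a)). reassoc.
  rewrite (seq2_congr_r _ _ _ _ (tensh_slide a (cup CB X))), <- (tens_id _ X X). reassoc.
  rewrite (seq2_congr_r _ _ _ _ (assoc_inv_nat a (idm X) (idm X))).
  reassoc. rewrite (seq2_congr_r _ _ _ _ (eq_sym (tensh_seq_id _ _))).
  rewrite <- (tens_seq _ _ _ _ _ _ _ a (idm Y) (idm X) a), seq_idl, seq_idr.
  reflexivity.
Qed.

Definition bend {X Y : ob C} (c : hom C X Y) : hom C (tens X Y) unit :=
  (c ⊗ idm Y) ;; cap CB Y.

Definition unbend {X Y : ob C} (e : hom C (tens Y X) unit) : hom C Y X :=
  runit_inv Y ;; (idm Y ⊗ cup CB X) ;; assoc_inv Y X X ;; (e ⊗ idm X) ;; lunit X.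

Lemma converse_unbend {X Y : ob C} (c : hom C X Y) : c† = unbend (sym Y X ;; bend c).
Proof.
  unfold converse, unbend, bend. fold (cup CB X) (cap CB Y).
  f_equal. rewrite <- seq_assoc, tensh_seq_id. f_equal.
  rewrite <- sym_nat. reassoc. rewrite tensh_seq_id. reassoc.
  rewrite <- (tensh_seq_id (sym Y Y) (cap CB Y)).
  unfold cap. rewrite <- (seq_assoc _ _ _ _ _ (sym Y Y)), cocopy_comm. reflexivity.
Qed.

Lemma bendK {X Y : ob C} (c : hom C Y X) : unbend (bend c) = c.
Proof.
  unfold unbend, bend. rewrite tensh_seq_id. reassoc.
  rewrite (seq2_congr_r _ _ _ _ (eq_sym (assoc_inv_nat c (idm X) (idm X)))).
  reassoc. rewrite tens_id.
  rewrite (seq2_congr_r _ _ _ _ (eq_sym (tensh_slide c (cup CB X)))).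
  reassoc. rewrite (seq2_congr_r _ _ _ _ (eq_sym (runit_inv_nat c))).
  pose proof (snake_r CB X) as H. repeat rewrite seq_assoc in H.
  reassoc. rewrite H. apply seq_idr.
Qed.

Lemma unbendK {X Y : ob C} (e : hom C (tens Y X) unit) : bend (unbend e) = e.
Proof.
  unfold bend, unbend. rewrite !tensh_seq_id. reassoc.
  rewrite (tensh_assoc_conj e (idm X) (idm X)). reassoc.
  rewrite (seq2_congr_r _ _ _ _ (eq_sym (lunit_tens X X))), tens_id, <- lunit_nat.
  rewrite (seq2_congr_r _ _ _ _ (tensh_slide e (cap CB X))).
  rewrite lunit_unit. reassoc. rewrite runit_nat.
  rewrite (seq2_congr_r _ _ _ _ (pentagon_assoc_inv_l Y X X X)). reassoc.
  rewrite <- (tens_id _ Y X).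
  rewrite (seq2_congr_r _ _ _ _ (eq_sym (assoc_inv_nat (idm Y) (idm X) (cap CB X)))).
  reassoc. rewrite (seq2_congr_r _ _ _ _ (assoc_inv_runit Y X)).
  rewrite (seq2_congr_r _ _ _ _ (assoc_nat _ _ _ _ _ _ _ (idm Y) (cup CB X) (idm X))).
  reassoc. rewrite (seq2_congr_r _ _ _ _ (triangle_inv Y X)).
  transitivity ((idm Y ⊗ (lunit_inv X ;; (cup CB X ⊗ idm X) ;; assoc X X X
                           ;; (idm X ⊗ cap CB X) ;; runit X)) ;; e).
  { rewrite !tensh_id_seq. reassoc. reflexivity. }
  rewrite snake_l, tens_id, seq_idl. reflexivity.
Qed.

Lemma converseK {X Y : ob C} (c : hom C X Y) : c†† = c.
Proof.
  rewrite (converse_unbend c†), (converse_unbend c), unbendK.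
  rewrite <- seq_assoc, sym_inv, seq_idl. apply bendK.
Qed.

Lemma converse_mono {X Y : ob C} (c d : hom C X Y) : c ≤ d -> c† ≤ d†.
Proof.
  intros H. unfold converse.
  apply seq_monol, seq_monol, seq_monor.
  apply tens_mono; [apply tens_mono |]; [apply le_refl | exact H | apply le_refl].
Qed.

Lemma converse_le {X Y : ob C} (c : hom C X Y) (d : hom C Y X) : c ≤ d† -> c† ≤ d.
Proof. intros H. rewrite <- (converseK d). apply converse_mono, H. Qed.

Lemma le_converse {X Y : ob C} (c : hom C X Y) (d : hom C Y X) : c† ≤ d -> c ≤ d†.
Proof. intros H. rewrite <- (converseK c). apply converse_mono, H. Qed.

End Converse.

Arguments bmeet {C} _ {X Y} _ _ : rename.
Arguments bjoin {C} _ {X Y} _ _ : rename.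
Arguments btop {C} _ {X Y} : rename.
Arguments bbot {C} _ {X Y} : rename.

Section Boolean.

Context {C : poset_smc} (B : boolean_homs C) {X Y : ob C}.

Implicit Types a b z : hom C X Y.

Lemma meet_le_l a b : bmeet B a b ≤ a.
Proof. apply (bmeet_glb C B X Y a b _), le_refl. Qed.

Lemma meet_le_r a b : bmeet B a b ≤ b.
Proof. apply (bmeet_glb C B X Y a b _), le_refl. Qed.

Lemma le_meet a b z : z ≤ a -> z ≤ b -> z ≤ bmeet B a b.
Proof. intros; apply bmeet_glb; split; assumption. Qed.

Lemma meetC_le a b : bmeet B a b ≤ bmeet B b a.
Proof. apply le_meet; [apply meet_le_r | apply meet_le_l]. Qed.

Lemma meet_neg_r a : bmeet B a (bneg B a) ≤ bbot B.
Proof. rewrite bneg_meet. apply le_refl. Qed.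

Lemma meet_neg_l a : bmeet B (bneg B a) a ≤ bbot B.
Proof. eapply le_trans; [apply meetC_le | apply meet_neg_r]. Qed.

Lemma le_join_meet_neg a b : a ≤ bjoin B (bmeet B a b) (bmeet B a (bneg B b)).
Proof.
  rewrite <- bdistr, bneg_join.
  apply le_meet; [apply le_refl | apply btop_max].
Qed.

Lemma le_neg_of_disjoint a b : bmeet B a b ≤ bbot B -> a ≤ bneg B b.
Proof.
  intros H. eapply le_trans; [apply (le_join_meet_neg a b) |].
  apply bjoin_lub; split; [| apply meet_le_r].
  eapply le_trans; [exact H | apply bbot_min].
Qed.

Lemma le_of_disjoint_neg a b : bmeet B a (bneg B b) ≤ bbot B -> a ≤ b.
Proof.
  intros H. eapply le_trans; [apply (le_join_meet_neg a b) |].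
  apply bjoin_lub; split; [apply meet_le_r |].
  eapply le_trans; [exact H | apply bbot_min].
Qed.

Lemma disjoint_of_le_neg a b : a ≤ bneg B b -> bmeet B a b ≤ bbot B.
Proof.
  intros H. eapply le_trans; [| apply (meet_neg_l b)].
  apply le_meet; [eapply le_trans; [apply meet_le_l | exact H] | apply meet_le_r].
Qed.

Lemma negK a : bneg B (bneg B a) = a.
Proof.
  apply le_antisym.
  - apply le_of_disjoint_neg, meet_neg_l.
  - apply le_neg_of_disjoint, meet_neg_r.
Qed.

Lemma le_neg_sym a b : a ≤ bneg B b -> b ≤ bneg B a.
Proof.
  intros H. apply le_neg_of_disjoint.
  eapply le_trans; [apply meetC_le | apply disjoint_of_le_neg, H].
Qed.

End Boolean.

Section Peircean.

Context {C : poset_smc} (CB : cartesian_bicategory C) (B : boolean_homs C).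

Local Notation "c †" := (converse CB c) (at level 8, left associativity, format "c †").

Lemma meet_copy {X Y : ob C} (u v : hom C X Y) :
  bmeet B u v = copy CB X ;; (u ⊗ v) ;; cocopy CB Y.
Proof.
  apply le_antisym.
  - set (m := bmeet B u v).
    apply (le_trans _ (m ;; copy CB Y ;; cocopy CB Y)).
    { apply eq_le. rewrite seq_assoc, special, seq_idr. reflexivity. }
    apply (le_trans _ (copy CB X ;; (m ⊗ m) ;; cocopy CB Y)).
    { apply seq_monol, lax_copy. }
    apply seq_monol, seq_monor, tens_mono; [apply meet_le_l | apply meet_le_r].
  - apply le_meet; [apply copy_tensh_cocopy_le_l | apply copy_tensh_cocopy_le_r].
Qed.

Lemma converse_bot {X Y : ob C} : (bbot B : hom C X Y)† ≤ bbot B.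
Proof. apply converse_le, bbot_min. Qed.

Lemma converse_disjoint {X Y : ob C} (p q : hom C X Y) :
  bmeet B p q ≤ bbot B -> bmeet B p† q† ≤ bbot B.
Proof.
  intros H. set (z := bmeet B p† q†).
  assert (Hz : z† ≤ bbot B).
  { eapply le_trans; [| exact H].
    apply le_meet; apply converse_le; [apply meet_le_l | apply meet_le_r]. }
  eapply le_trans; [apply le_converse, Hz | apply converse_bot].
Qed.

Lemma converse_neg_le {X Y : ob C} (c : hom C X Y) : (bneg B c)† ≤ bneg B c†.
Proof. apply le_neg_of_disjoint, converse_disjoint, meet_neg_l. Qed.

Lemma converse_neg {X Y : ob C} (c : hom C X Y) : (bneg B c)† = bneg B c†.
Proof.
  apply le_antisym; [apply converse_neg_le |].
  apply le_converse.
  pose proof (converse_neg_le c†) as H. rewrite converseK in H. exact H.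
Qed.

Hypothesis HP : peircean CB B.

(* [disc] is a map, so [disc ;; ¬ codisc = ¬ (disc ;; codisc)], the complement of the top. *)
Lemma seq_bot {X Y Z : ob C} (a : hom C X Y) : a ;; bbot B ≤ (bbot B : hom C X Z).
Proof.
  apply (le_trans _ (a ;; (disc CB Y ;; bneg B (codisc CB Z)))).
  { apply seq_monor, bbot_min. }
  rewrite <- seq_assoc. eapply le_trans; [apply seq_monol, lax_disc |].
  rewrite (HP _ _ _ _ _ (disc_is_map CB X)), <- (bneg_meet C B X Z (disc CB X ;; codisc CB Z)).
  apply le_meet; [apply le_disc_codisc | apply le_refl].
Qed.

Lemma seq_neg_converse_le {X Y : ob C} (a : hom C X Y) : a ;; bneg B a† ≤ bneg B (idm X).
Proof.
  set (g := bneg B a†).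
  apply le_neg_of_disjoint.
  rewrite meet_copy, tensh_seq_id, <- seq_assoc.
  eapply le_trans; [apply seq_monol, seq_monol, copy_tensh_le_converse |].
  apply (le_trans _ (a ;; bmeet B g a†)).
  { apply eq_le. rewrite meet_copy, (tensh_factor_rl g a†). reassoc. reflexivity. }
  eapply le_trans; [apply seq_monor, meet_neg_l | apply seq_bot].
Qed.

End Peircean.

Theorem lemma67 (C : poset_smc) (CB : cartesian_bicategory C) (B : boolean_homs C)
  (HP : peircean CB B) (X Y : ob C) (c : hom C X Y) :
  c ;; converse CB (bneg B c) ≤ did B X /\
  idm Y ≤ dseq B (converse CB (bneg B c)) c /\
  converse CB (bneg B c) ;; c ≤ did B Y /\
  idm X ≤ dseq B c (converse CB (bneg B c)).
Proof.
  unfold did, dseq. rewrite converse_neg, negK.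
  split; [| split; [| split]].
  - apply (seq_neg_converse_le CB B HP c).
  - apply le_neg_sym.
    pose proof (seq_neg_converse_le CB B HP (converse CB c)) as H.
    rewrite converseK in H. exact H.
  - pose proof (seq_neg_converse_le CB B HP (bneg B (converse CB c))) as H.
    rewrite converse_neg, converseK, negK in H. exact H.
  - apply le_neg_sym.
    pose proof (seq_neg_converse_le CB B HP (bneg B c)) as H.
    rewrite converse_neg, negK in H. exact H.
Qed.
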